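(* Let $G$ be a $6$-regular graph, $\mathcal S$ a canonical path partition of $G$, and $P$ a path component with end-vertices $o_1,o_2$. Let $x_1,x_2\in V_2$ be path neighbors on $P$, with $x_1$ immediately preceding $x_2$ when $P$ is traversed from $o_1$ to $o_2$, and suppose $x_1$ goes to $o_1$ and $x_2$ goes to $o_2$. Then no vertex of $P$ lying strictly between $o_1$ and $x_1$, and no vertex of $P$ lying strictly between $x_2$ and $o_2$, is heavy.
   Context: All graphs are finite, simple and undirected. A path partition of $G=(V,E)$ is a set of vertex-disjoint paths (single vertices allowed) covering $V$; its members are components. A component with $t\ge3$ vertices is a cycle component if the subgraph induced on its vertex set has a spanning cycle; a one-vertex component is an isolated vertex; every other component is a path component. A path partition is canonical if (1) it has the minimum number of components among all path partitions of $G$; (2) among those, it has the maximum number of cycle components; (3) it has no isolated vertices. Given a canonical path partition $\mathcal S$ of $G$: two vertices are path neighbors if they are consecutive on a path component. An edge of $G$ is a free edge unless it joins two path neighbors or has both endpoints in the same cycle component. $V_1$ is the set of end-vertices of path components together with all vertices of cycle components. $V_2$ is the set of vertices not in $V_1$ that are joined by a free edge to a vertex of $V_1$. A balanced edge is a free edge with one endpoint in $V_1$ and the other in $V_2$; for $x\in V_2$, $y\in V_1$ we say $x$ goes to $y$ if $xy$ is a balanced edge. A vertex of $V_2$ is heavy if it is incident to at least three balanced edges whose other endpoints are end-vertices of path components. *)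

From mathcomp Require Import all_boot.
Set Implicit Arguments. Unset Strict Implicit. Unset Printing Implicit Defensive.

Definition simple_graph (T : finType) (e : rel T) : Prop :=
  symmetric e /\ irreflexive e.

Definition regular (T : finType) (e : rel T) (k : nat) : Prop :=
  forall v : T, #|[set w | e v w]| = k.

Definition gpath (T : finType) (e : rel T) (p : seq T) : bool :=
  if p is x :: s then path e x s else false.

Definition path_partition (T : finType) (e : rel T) (S : seq (seq T)) : Prop :=
  all (gpath e) S /\ perm_eq (flatten S) (enum T).

(* Cycle component: at least 3 vertices and the induced subgraph on its vertex
   set has a spanning cycle (some ordering of the vertices is an e-cycle). *)
Definition cycle_comp (T : finType) (e : rel T) (p : seq T) : bool :=
  (2 < size p) && has (cycle e) (permutations p).

Definition isolated_comp (T : finType) (p : seq T) : bool := size p == 1.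

Definition path_comp (T : finType) (e : rel T) (p : seq T) : bool :=
  ~~ cycle_comp e p && ~~ isolated_comp p.

Definition canonical (T : finType) (e : rel T) (S : seq (seq T)) : Prop :=
  [/\ path_partition e S,
      (forall S', path_partition e S' -> size S <= size S'),
      (forall S', path_partition e S' -> size S' = size S ->
         count (cycle_comp e) S' <= count (cycle_comp e) S)
    & ~~ has (@isolated_comp T) S].

Fixpoint adj_in (T : eqType) (x y : T) (p : seq T) : bool :=
  match p with
  | a :: ((b :: _) as q) => ((a == x) && (b == y)) || adj_in x y q
  | _ => false
  end.

Definition path_nbrs (T : finType) (e : rel T) (S : seq (seq T)) (x y : T) : bool :=
  has (fun p => path_comp e p && (adj_in x y p || adj_in y x p)) S.

Definition same_cycle_comp (T : finType) (e : rel T) (S : seq (seq T)) (x y : T) : bool :=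
  has (fun p => cycle_comp e p && (x \in p) && (y \in p)) S.

Definition free_edge (T : finType) (e : rel T) (S : seq (seq T)) (x y : T) : bool :=
  [&& e x y, ~~ path_nbrs e S x y & ~~ same_cycle_comp e S x y].

Definition end_vertex (T : finType) (e : rel T) (S : seq (seq T)) (x : T) : bool :=
  has (fun p => path_comp e p && ((x == head x p) || (x == last x p))) S.

Definition inV1 (T : finType) (e : rel T) (S : seq (seq T)) (x : T) : bool :=
  end_vertex e S x || has (fun p => cycle_comp e p && (x \in p)) S.

Definition inV2 (T : finType) (e : rel T) (S : seq (seq T)) (x : T) : bool :=
  ~~ inV1 e S x && [exists y, inV1 e S y && free_edge e S x y].

Definition balanced (T : finType) (e : rel T) (S : seq (seq T)) (x y : T) : bool :=
  free_edge e S x y &&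
  ((inV1 e S x && inV2 e S y) || (inV2 e S x && inV1 e S y)).

Definition goes_to (T : finType) (e : rel T) (S : seq (seq T)) (x y : T) : bool :=
  [&& inV2 e S x, inV1 e S y & balanced e S x y].

Definition heavy (T : finType) (e : rel T) (S : seq (seq T)) (x : T) : bool :=
  inV2 e S x &&
  (3 <= #|[set y | balanced e S x y && end_vertex e S y]|).

(* Suppose a vertex v strictly between o1 and x1 is heavy.  As P has only two
   end-vertices, v has a balanced neighbour y that is an end-vertex of another
   path component Q.  The free edges x1 o1 and x2 o2 let us reroute P:
   x2 ... o2 closes into a cycle, while succ(v) ... x1, o1 ... v is a path that
   continues through the edge v y into Q.  Replacing P and Q by this cycle and
   this path keeps the number of components and adds a cycle component,
   contradicting canonicity.  The case between x2 and o2 is the same argument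
   applied to the reversed path. *)
From mathcomp Require Import all_boot zify.
Set Implicit Arguments. Unset Strict Implicit. Unset Printing Implicit Defensive.

Section Sequences.
Variable T : eqType.

Lemma adj_inP (x y : T) s : reflect (exists L R, s = L ++ x :: y :: R) (adj_in x y s).
Proof.
apply: (iffP idP) => [|[L [R ->]]].
  elim: s => [|a [|b s] IH] //= /orP[/andP[/eqP-> /eqP->]|/IH[L [R E]]].
    by exists [::], s.
  by exists (a :: L), R; rewrite E.
elim: L => [|a L IH] /=; first by rewrite !eqxx.
by case: L IH => [|b L] /= ->; rewrite orbT.
Qed.

Lemma adj_in_rev (x y : T) s : adj_in x y (rev s) = adj_in y x s.
Proof.
apply/adj_inP/adj_inP => [[L [R E]]|[L [R ->]]].
  by exists (rev R), (rev L); rewrite -[s]revK E rev_cat !rev_cons -!cats1 -!catA.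
by exists (rev R), (rev L); rewrite rev_cat !rev_cons -!cats1 -!catA.
Qed.

Lemma index_rev (x : T) s : uniq s -> x \in s -> index x (rev s) = (size s).-1 - index x s.
Proof.
move=> us xs; case/splitPr: xs us => L R; rewrite cat_uniq /= => /and4P[_ /norP[xL _] xR _].
rewrite rev_cat rev_cons -cats1 -catA !index_cat mem_rev (negbTE xR) (negbTE xL).
by rewrite /= !eqxx mem_seq1 eqxx size_cat /= size_rev; lia.
Qed.

End Sequences.

Section GraphPaths.
Variables (T : finType) (e : rel T).
Hypothesis sym_e : symmetric e.

Lemma gpath_rev s : gpath e s -> gpath e (rev s).
Proof.
case: s => [|a s] //= pas; rewrite lastI rev_rcons /= rev_path.
by rewrite (eq_path (e' := e)) // => b c; rewrite /= sym_e.
Qed.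

Lemma gpath_from_end Q (y : T) : gpath e Q -> (y == head y Q) || (y == last y Q) ->
  exists qs, perm_eq (y :: qs) Q /\ path e y qs.
Proof.
case: Q => [|q qs] // pQ /orP[/eqP->|/eqP yl]; first by exists qs.
move: yl => /= yl; have := gpath_rev pQ; rewrite lastI rev_rcons /= -yl => pr.
exists (rev (belast q qs)); split => //; by rewrite yl -rev_rcons -lastI perm_rev.
Qed.

Lemma gpath_of_path a s : path e a s -> s != [::] -> gpath e s.
Proof. by case: s => //= b s /andP[]. Qed.

Lemma gpath_of_cycle C : cycle e C -> C != [::] -> gpath e C.
Proof. by case: C => [|c C] //=; rewrite rcons_path => /andP[]. Qed.

Lemma gpath_cat_rcons W (v y : T) ys : gpath e (rcons W v) -> e v y -> path e y ys ->
  gpath e (rcons W v ++ y :: ys).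
Proof.
case: W => [|w W] /=; first by move=> _ -> ->.
by rewrite cat_path last_rcons /= => -> -> ->.
Qed.

End GraphPaths.

Section CanonicalPartition.
Variables (T : finType) (e : rel T) (S : seq (seq T)).
Hypotheses (sym_e : symmetric e) (canS : canonical e S).

Lemma canonical_uniq_rem P : P \in S -> uniq (P ++ flatten (rem P S)).
Proof.
case: canS => [[_ pS] _ _ _] PS.
by rewrite -(perm_uniq (perm_flatten (perm_to_rem PS))) (perm_uniq pS) enum_uniq.
Qed.

Lemma canonical_comp_uniq P : P \in S -> uniq P.
Proof. by move/canonical_uniq_rem; rewrite cat_uniq => /andP[]. Qed.

Lemma end_vertex_comp y : end_vertex e S y ->
  exists2 Q, Q \in S & [&& path_comp e Q, gpath e Q, y \in Q & (y == head y Q) || (y == last y Q)].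
Proof.
case/hasP=> Q QS /andP[pcQ endQ]; exists Q => //.
case: canS => [[/allP gS _] _ _ _]; have := gS Q QS.
case: Q QS pcQ endQ => [|q qs] // _ -> endQ ->; rewrite endQ andbT /=.
by move: endQ => /= /orP[/eqP->|/eqP->]; rewrite ?mem_head ?mem_last.
Qed.

Lemma canonical_comp_eq P Q y : P \in S -> Q \in S -> y \in P -> y \in Q -> Q = P.
Proof.
move=> PS QS yP yQ; apply/eqP; apply: contraT => nQP.
have := canonical_uniq_rem PS; rewrite cat_uniq => /and3P[_ /hasP[]]; exists y => //.
by apply/flattenP; exists Q; rewrite // rem_mem.
Qed.

Lemma mem_end_vertex p ps y : p :: ps \in S -> y \in p :: ps -> end_vertex e S y ->
  (y == p) || (y == last p ps).
Proof.
move=> PS yP /end_vertex_comp[Q QS /and4P[_ _ yQ endQ]].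
by move: endQ; rewrite (canonical_comp_eq PS QS yP yQ).
Qed.

Lemma heavy_outer_end_nbr P v : P \in S -> heavy e S v ->
  exists y, [/\ e v y, y \notin P & end_vertex e S y].
Proof.
move=> PS /andP[_ big].
case: (boolP [exists y, [&& e v y, y \notin P & end_vertex e S y]]).
  by case/existsP=> y /and3P[evy yP ey]; exists y.
rewrite negb_exists => /forallP outer; exfalso; move: big; apply/negP; rewrite -ltnNge ltnS.
apply: leq_trans (subset_leq_card (_ : _ \subset [set head v P; last v P])) _.
  apply/subsetP => y; rewrite inE => /andP[/andP[/and3P[evy _ _] _] ey].
  have := outer y; rewrite evy ey andbT negbK.
  by case: P PS {outer} => [|p ps] // PS yP; rewrite !inE; apply: mem_end_vertex.
by rewrite cards2; case: (_ != _).
Qed.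

Lemma no_detachable_cycle P C W v y :
  P \in S -> path_comp e P -> perm_eq P (C ++ rcons W v) -> cycle e C -> 2 < size C ->
  gpath e (rcons W v) -> e v y -> y \notin P -> end_vertex e S y -> False.
Proof.
move=> PS pcP pP cC sC gW evy yP /end_vertex_comp[Q QS /and4P[pcQ gQ yQ endQ]].
case: canS => [[/allP gS pS] _ maxcyc _].
have [qs [pQ pq]] := gpath_from_end sym_e gQ endQ.
have QrP : Q \in rem P S by rewrite rem_mem //; apply: contraNneq yP => <-.
set rest := rem Q (rem P S).
have SE : perm_eq S (P :: Q :: rest).
  by apply: perm_trans (perm_to_rem PS) _; rewrite perm_cons perm_to_rem.
set S' := C :: (rcons W v ++ y :: qs) :: rest.
have ppS' : path_partition e S'.
  split.
  - rewrite /= gpath_of_cycle ?gpath_cat_rcons //=; last by case: (C) sC.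
    by apply/allP => p /mem_rem /mem_rem; apply: gS.
  - apply: perm_trans pS; rewrite perm_sym; apply: perm_trans (perm_flatten SE) _.
    by rewrite /= !catA perm_cat2r perm_cat // perm_sym.
have cycC : cycle_comp e C by rewrite /cycle_comp sC; apply/hasP; exists C; rewrite ?mem_permutations.
have := maxcyc S' ppS'; rewrite (perm_size SE) (permP SE) /= cycC => /(_ erefl).
case/andP: pcP => /negbTE-> _; case/andP: pcQ => /negbTE-> _.
by rewrite add1n ltnNge leq_addl.
Qed.

Lemma not_heavy_before P s (o o' x x' v : T) mid :
  P \in S -> path_comp e P -> perm_eq s P -> gpath e s -> s = o :: rcons mid o' ->
  adj_in x x' s -> e x o -> e x' o' -> x' != o' -> ~~ adj_in x' o' s ->
  0 < index v s < index x s -> ~~ heavy e S v.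
Proof.
move=> PS pcP sP gs Es /adj_inP[L [R EL]] exo ex'o' nx'o' nadj /andP[iv0 ivx].
apply/negP => /(heavy_outer_end_nbr PS)[y [evy yP ey]].
have xL : x \notin L.
  by move: (canonical_comp_uniq PS); rewrite -(perm_uniq sP) EL cat_uniq => /and3P[_ /norP[]].
have vL : v \in L.
  move: ivx; rewrite EL !index_cat (negbTE xL) /= eqxx addn0.
  by case: ifP => // _; rewrite ltnNge leq_addr.
case: L EL vL {xL} => [|l L'] // EL.
have lo : l = o by move: Es; rewrite EL => -[].
rewrite {l}lo in EL *; rewrite in_cons => /orP[/eqP vo|].
  by move: iv0; rewrite EL vo /= eqxx.
move=> vL'; case/splitPr: vL' EL => L1 L2 EL.
have lastR : last x' R = o' by move: Es; rewrite EL => /(congr1 (last o)); rewrite last_cat /= last_rcons.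
have sR : 1 < size R.
  case: R EL lastR => [|r [|r' R']] //= EL lastR; first by rewrite lastR eqxx in nx'o'.
  suff : adj_in x' o' s by rewrite (negbTE nadj).
  apply/adj_inP; exists (rcons (o :: L1 ++ v :: L2) x), [::].
  by rewrite EL lastR cat_rcons.
move: gs; rewrite EL /= !(cat_path, last_cat) /= => /and4P[/and3P[pL1 eL1v pL2] eL2x _ pR].
apply: (no_detachable_cycle (C := x' :: R) (W := L2 ++ x :: o :: L1) PS pcP _ _ _ _ evy yP ey).
- rewrite -(permPl sP) EL; apply/permP => a.
  rewrite -cats1 /= !count_cat /= ?count_cat /=; clear -a; lia.
- by rewrite /= rcons_path pR lastR sym_e ex'o'.
- by [].
- apply: (gpath_of_path (a := v)); last by rewrite -size_eq0 size_rcons.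
  by rewrite rcons_path cat_path /= pL2 eL2x exo pL1 last_cat eL1v.
Qed.

Lemma goes_to_not_path_nbr P x o : P \in S -> path_comp e P -> goes_to e S x o ->
  [/\ e x o, x != o, ~~ adj_in x o P & ~~ adj_in o x P].
Proof.
move=> PS pcP /and3P[/andP[nV1x _] V1o /andP[/and3P[exo /hasPn nb _] _]].
have := nb P PS; rewrite pcP /= negb_or => /andP[-> ->].
by rewrite exo; split=> //; apply: contraNneq nV1x => ->.
Qed.

End CanonicalPartition.

Theorem mainTheorem12 (T : finType) (e : rel T) (S : seq (seq T))
  (P : seq T) (o1 o2 x1 x2 : T) (mid : seq T) :
  simple_graph e -> regular e 6 -> canonical e S ->
  P \in S -> path_comp e P ->
  P = o1 :: rcons mid o2 ->
  inV2 e S x1 -> inV2 e S x2 ->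
  adj_in x1 x2 P ->
  goes_to e S x1 o1 -> goes_to e S x2 o2 ->
  (forall v, v \in P -> 0 < index v P < index x1 P -> ~~ heavy e S v) /\
  (forall v, v \in P -> index x2 P < index v P < (size P).-1 -> ~~ heavy e S v).
Proof.
move=> [sym _] _ canS PS pcP EP _ _ adj12 go1 go2.
have [e1 n1 _ n1'] := goes_to_not_path_nbr PS pcP go1.
have [e2 n2 n2' _] := goes_to_not_path_nbr PS pcP go2.
have gP : gpath e P by case: canS => [[/allP gS _] _ _ _]; apply: gS.
have x2P : x2 \in P by case/adj_inP: adj12 => L [R ->]; rewrite mem_cat !inE eqxx !(orbT, orTb).
split=> v vP iv.
  exact: (not_heavy_before sym canS PS pcP (perm_refl P) gP EP adj12 e1 e2 n2 n2' iv).
apply: (not_heavy_before sym canS PS pcP (permEl (perm_rev P)) (gpath_rev sym gP) _ _ e2 e1 n1);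
  rewrite ?adj_in_rev //; first by rewrite EP rev_cons rev_rcons.
have uP := canonical_comp_uniq canS PS.
case/andP: iv => lt2v ltv; rewrite !index_rev // subn_gt0 ltv ltn_sub2l //.
exact: ltn_trans ltv.
Qed.
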